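(* Let $n\geq 1$. The map $\rho_i\mapsto x^iy^{-i}$ ($1\leq i\leq n$) extends to a group isomorphism from the group with generators $\rho_1,\dots,\rho_n$ and relations $\rho_1\rho_n\rho_i=\rho_{i+1}\rho_n$ ($1\leq i\leq n-1$) onto the group $G(n,n+1)=\langle x,y\mid x^n=y^{n+1}\rangle$.
   Context: $G(n,n+1)$ is the $(n,n+1)$-torus knot group, given by the displayed presentation. *)

(* Finitely presented groups encoded by words modulo
   the congruence generated by free reduction and the relators. *)
From Stdlib Require List.
From mathcomp Require Import all_boot.
Set Implicit Arguments. Unset Strict Implicit. Unset Printing Implicit Defensive.

(* A letter (s, b): the generator s if b = false, its inverse if b = true. *)
Definition word (S : Type) := seq (S * bool).

Definition inv_word (S : Type) (w : word S) : word S :=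
  rev (map (fun l => (l.1, ~~ l.2)) w).

(* Equality in the group < S | R > (R a list of relators, each relator r
   meaning r = 1): the smallest equivalence relation on words which is
   closed under free reduction and deletion of relators in any position.
   This is exactly equality modulo the normal closure of R in the free group. *)
Inductive wequiv (S : Type) (R : seq (word S)) : word S -> word S -> Prop :=
| we_refl w : wequiv R w w
| we_sym w1 w2 : wequiv R w1 w2 -> wequiv R w2 w1
| we_trans w1 w2 w3 : wequiv R w1 w2 -> wequiv R w2 w3 -> wequiv R w1 w3
| we_free (u v : word S) (s : S) (b : bool) :
    wequiv R (u ++ [:: (s, b); (s, ~~ b)] ++ v) (u ++ v)
| we_rel (u v r : word S) : List.In r R -> wequiv R (u ++ r ++ v) (u ++ v).

(* Generator rho_(k+1) is represented by the ordinal k : 'I_n. *)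
Definition ord_of (n : nat) (i0 : 'I_n) (k : nat) : 'I_n := insubd i0 k.

(* For i : 'I_n with i.+1 < n (i.e. 1 <= i+1 <= n-1), the relator of
   rho_1 rho_n rho_(i+1) = rho_(i+2) rho_n, namely
   rho_1 rho_n rho_(i+1) rho_n^-1 rho_(i+2)^-1. *)
Definition rho_relator (n : nat) (i : 'I_n) : word 'I_n :=
  let o := ord_of i in
  [:: (o 0, false); (o n.-1, false); (o i, false);
      (o n.-1, true); (o i.+1, true)].

Definition rho_rels (n : nat) : seq (word 'I_n) :=
  map (@rho_relator n) (filter (fun i : 'I_n => i.+1 < n) (enum 'I_n)).

Inductive xy := gen_x | gen_y.

Definition torus_rels (n : nat) : seq (word xy) :=
  [:: nseq n (gen_x, false) ++ nseq n.+1 (gen_y, true)].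

Definition rho_img (n : nat) (i : 'I_n) : word xy :=
  nseq i.+1 (gen_x, false) ++ nseq i.+1 (gen_y, true).

Definition rho_letter (n : nat) (l : 'I_n * bool) : word xy :=
  if l.2 then inv_word (rho_img l.1) else rho_img l.1.

Definition rho_hom (n : nat) (w : word 'I_n) : word xy :=
  flatten (map (@rho_letter n) w).

(* Write xy_pow k for the word x^k y^-k.  In G(n, n+1) the defining relation
   reads xy_pow n = y, so rho_n |-> y and rho_1 rho_n |-> x y^-1 y = x.  This
   suggests the inverse map psi : x |-> rho_1 rho_n, y |-> rho_n, and the
   relations of P_n say exactly that psi(xy_pow (k+1)) = rho_(k+1), by
   induction on k. *)
From Stdlib Require Import Setoid Morphisms.
From mathcomp Require Import all_boot.
Set Implicit Arguments.
Unset Strict Implicit.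
Unset Printing Implicit Defensive.

Lemma inP (T : eqType) (x : T) (s : seq T) : List.In x s <-> x \in s.
Proof.
elim: s => [|y s IH] //=; rewrite in_cons.
split=> [[->|/IH->]|/orP[/eqP->|/IH]]; rewrite ?eqxx ?orbT; auto.
Qed.

#[local] Hint Resolve we_refl : core.

Lemma nseqSr (T : Type) (k : nat) (a : T) : nseq k.+1 a = nseq k a ++ [:: a].
Proof. by elim: k => //= k <-. Qed.

Section WordCalculus.
Variables (S : Type) (R : seq (word S)).

Lemma wequiv_catl (c a b : word S) : wequiv R a b -> wequiv R (c ++ a) (c ++ b).
Proof.
elim=> [w|w1 w2 _ IH|w1 w2 w3 _ IH1 _ IH2|u v s t|u v r Hr].
- exact: we_refl.
- exact: we_sym.
- exact: we_trans IH1 IH2.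
- by rewrite !catA -(catA _ _ v); apply: we_free.
- by rewrite !catA -(catA _ _ v); apply: we_rel.
Qed.

Lemma wequiv_catr (c a b : word S) : wequiv R a b -> wequiv R (a ++ c) (b ++ c).
Proof.
elim=> [w|w1 w2 _ IH|w1 w2 w3 _ IH1 _ IH2|u v s t|u v r Hr].
- exact: we_refl.
- exact: we_sym.
- exact: we_trans IH1 IH2.
- by rewrite -!catA; apply: we_free.
- by rewrite -!catA; apply: we_rel.
Qed.

Global Instance wequiv_Equivalence : Equivalence (wequiv R).
Proof. by split; [exact: we_refl | exact: we_sym | exact: we_trans]. Qed.

Global Instance cat_wequiv_Proper :
  Proper (wequiv R ==> wequiv R ==> wequiv R) (@cat (S * bool)).
Proof. by move=> a b Hab c d Hcd; apply: we_trans (wequiv_catr c Hab) (wequiv_catl b Hcd). Qed.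

Lemma wequiv_free (u v : word S) (s : S) (b : bool) :
  wequiv R (u ++ (s, b) :: (s, ~~ b) :: v) (u ++ v).
Proof. exact: we_free. Qed.

Lemma wequiv_rel0 (r : word S) : List.In r R -> wequiv R r [::].
Proof. by move=> Hr; have := we_rel [::] [::] Hr; rewrite /= cats0. Qed.

Lemma inv_word_cat (a b : word S) : inv_word (a ++ b) = inv_word b ++ inv_word a.
Proof. by rewrite /inv_word map_cat rev_cat. Qed.

Lemma inv_wordK (a : word S) : inv_word (inv_word a) = a.
Proof.
rewrite /inv_word map_rev revK -map_comp -[RHS]map_id.
by apply: eq_map => -[s b] /=; rewrite negbK.
Qed.

Lemma wequiv_cancel (w : word S) : wequiv R (w ++ inv_word w) [::].
Proof.
elim: w => [|[s b] w IH]; first reflexivity.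
rewrite -cat1s inv_word_cat -catA (catA w) IH /=.
exact: (wequiv_free [::] [::]).
Qed.

Lemma wequiv_cancel' (w : word S) : wequiv R (inv_word w ++ w) [::].
Proof. by have := wequiv_cancel (inv_word w); rewrite inv_wordK. Qed.

Global Instance inv_word_Proper : Proper (wequiv R ==> wequiv R) (@inv_word S).
Proof.
move=> a b Hab.
transitivity (inv_word a ++ (b ++ inv_word b)); first by rewrite wequiv_cancel cats0.
by rewrite -(wequiv_catl _ (wequiv_catr (inv_word b) Hab)) catA wequiv_cancel'.
Qed.

End WordCalculus.

Section WordMaps.
Variables (S T : Type).

Definition letter_map (g : S -> word T) (l : S * bool) : word T :=
  if l.2 then inv_word (g l.1) else g l.1.

Lemma letter_map_gen (g : S -> word T) (s : S) : letter_map g (s, false) = g s.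
Proof. by []. Qed.

Lemma letter_map_inv (g : S -> word T) (s : S) :
  letter_map g (s, true) = inv_word (g s).
Proof. by []. Qed.

Lemma letter_map_flip (g : S -> word T) (s : S) (b : bool) :
  letter_map g (s, ~~ b) = inv_word (letter_map g (s, b)).
Proof. by case: b; rewrite /letter_map /= ?inv_wordK. Qed.

Definition homw (f : S * bool -> word T) (w : word S) : word T := flatten (map f w).

Lemma homw_cat (f : S * bool -> word T) (a b : word S) :
  homw f (a ++ b) = homw f a ++ homw f b.
Proof. by rewrite /homw map_cat flatten_cat. Qed.

Lemma homw_nil (f : S * bool -> word T) : homw f [::] = [::].
Proof. by []. Qed.

Lemma homw_cons (f : S * bool -> word T) (l : S * bool) (w : word S) :
  homw f (l :: w) = f l ++ homw f w.
Proof. by []. Qed.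

Lemma homw_inv (g : S -> word T) (w : word S) :
  homw (letter_map g) (inv_word w) = inv_word (homw (letter_map g) w).
Proof.
elim: w => [|[s b] w IH] //.
rewrite -cat1s (inv_word_cat [:: _]) !homw_cat IH inv_word_cat; congr (_ ++ _).
by rewrite /homw /= !cats0 letter_map_flip.
Qed.

Variables (R : seq (word S)) (R' : seq (word T)).

Lemma homw_wequiv (g : S -> word T) :
  (forall r, List.In r R -> wequiv R' (homw (letter_map g) r) [::]) ->
  forall a b, wequiv R a b -> wequiv R' (homw (letter_map g) a) (homw (letter_map g) b).
Proof.
move=> Hrel a b; elim=> [w|w1 w2 _ IH|w1 w2 w3 _ IH1 _ IH2|u v s c|u v r Hr].
- reflexivity.
- by symmetry.
- exact: we_trans IH1 IH2.
- by rewrite !homw_cat !homw_cons letter_map_flip (catA (letter_map g (s, c)))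
     wequiv_cancel.
- by rewrite !homw_cat (Hrel _ Hr).
Qed.

End WordMaps.

Section WordMapInverse.
Variables (S T : Type) (R : seq (word S)).

Lemma homw_comp_id (f : S -> word T) (g : T -> word S) :
  (forall s, wequiv R (homw (letter_map g) (f s)) [:: (s, false)]) ->
  forall w, wequiv R (homw (letter_map g) (homw (letter_map f) w)) w.
Proof.
move=> Hgen; elim=> [|[s b] w IH]; first reflexivity.
rewrite homw_cons homw_cat IH -cat1s; apply: wequiv_catr.
by case: b; rewrite ?letter_map_gen ?letter_map_inv ?homw_inv Hgen.
Qed.

End WordMapInverse.

Local Notation X := (gen_x, false).
Local Notation Y := (gen_y, false).
Local Notation Yinv := (gen_y, true).

Definition xy_pow (k : nat) : word xy := nseq k X ++ nseq k Yinv.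

Lemma xy_powS (k : nat) : xy_pow k.+1 = X :: xy_pow k ++ [:: Yinv].
Proof. by rewrite /xy_pow (nseqSr k Yinv) catA. Qed.

Section RhoPsi.
Variable m : nat.
Local Notation n := m.+1.

(* The generator rho_(k+1) of P_n, and the relator
   rho_1 rho_n rho_(k+1) rho_n^-1 rho_(k+2)^-1. *)
Definition rho (k : nat) : 'I_n * bool := (inord k, false).

Definition rho_rel (k : nat) : word 'I_n :=
  [:: rho 0; rho m; rho k; (inord m, true); (inord k.+1, true)].

Lemma ord_ofE (i0 : 'I_n) (k : nat) : k < n -> ord_of i0 k = inord k.
Proof. by move=> hk; apply: val_inj; rewrite /ord_of /inord !val_insubd hk. Qed.

Lemma rho_rels_memE (r : word 'I_n) :
  List.In r (rho_rels n) <-> exists2 k, k < m & r = rho_rel k.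
Proof.
rewrite inP; split.
- case/mapP=> i; rewrite mem_filter => /andP[hi _] ->.
  by exists (val i) => //; rewrite /rho_relator /rho_rel /rho /= !ord_ofE.
- case=> k hk ->; have hk' : k < n := ltnW hk.
  apply/mapP; exists (inord k); first by rewrite mem_filter mem_enum inordK // ltnS hk.
  by rewrite /rho_relator /rho_rel /rho /= !ord_ofE ?inordK.
Qed.

Lemma torus_relE : torus_rels n = [:: xy_pow n ++ [:: Yinv]].
Proof. by rewrite /torus_rels /xy_pow (nseqSr n Yinv) catA. Qed.

Lemma xy_pow_n : wequiv (torus_rels n) (xy_pow n) [:: Y].
Proof.
transitivity (xy_pow n ++ [:: Yinv; Y]).
  by symmetry; have := wequiv_free (torus_rels n) (xy_pow n) [::] gen_y true; rewrite cats0.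
have rel_in : List.In (xy_pow n ++ [:: Yinv]) (torus_rels n) by rewrite torus_relE; left.
by rewrite -[[:: Yinv; Y]]/([:: Yinv] ++ [:: Y]) catA (wequiv_rel0 rel_in).
Qed.

Lemma rho_homE (w : word 'I_n) : rho_hom w = homw (letter_map (@rho_img n)) w.
Proof. by []. Qed.

Lemma rho_imgE (i : 'I_n) : rho_img i = xy_pow i.+1.
Proof. by []. Qed.

Lemma rho_img_inord (k : nat) : k < n -> rho_img (inord k : 'I_n) = xy_pow k.+1.
Proof. by move=> hk; rewrite rho_imgE inordK. Qed.

(* rho kills the relators: modulo x^n y^-n = y, the image of the relator is
   x y^-1 . y . x^(k+1) y^-(k+1) . y^-1 . (x^(k+2) y^-(k+2))^-1 = 1. *)
Lemma rho_kills_rels (r : word 'I_n) :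
  List.In r (rho_rels n) -> wequiv (torus_rels n) (homw (letter_map (@rho_img n)) r) [::].
Proof.
case/rho_rels_memE=> k hk ->.
rewrite /rho_rel /rho !homw_cons homw_nil cats0 !letter_map_gen !letter_map_inv.
rewrite !rho_img_inord ?ltnS ?(ltnW hk) // xy_pow_n.
rewrite -[xy_pow 1 ++ _]/([:: X] ++ (gen_y, true) :: (gen_y, ~~ true) :: _) wequiv_free.
by rewrite (catA (xy_pow k.+1)) catA cat1s -(xy_powS k.+1) wequiv_cancel.
Qed.

Definition psi_gen (s : xy) : word 'I_n :=
  if s is gen_x then [:: rho 0; rho m] else [:: rho m].

Lemma psi_xy_pow (k : nat) : k <= m ->
  wequiv (rho_rels n) (homw (letter_map psi_gen) (xy_pow k.+1)) [:: rho k].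
Proof.
elim: k => [_|k IH hk].
  exact: (wequiv_free _ [:: rho 0] [::] (inord m)).
rewrite xy_powS homw_cons homw_cat IH ?(ltnW hk) // homw_cons homw_nil cats0.
transitivity (rho_rel k ++ [:: rho k.+1]).
  symmetry; have := wequiv_free (rho_rels n)
    [:: rho 0; rho m; rho k; (inord m, true)] [::] (inord k.+1) true.
  by rewrite cats0.
have rel_in : List.In (rho_rel k) (rho_rels n) by apply/rho_rels_memE; exists k.
by rewrite (wequiv_rel0 rel_in).
Qed.

Lemma psi_kills_rels (r : word xy) :
  List.In r (torus_rels n) -> wequiv (rho_rels n) (homw (letter_map psi_gen) r) [::].
Proof.
rewrite torus_relE => -[<-|//].
rewrite homw_cat psi_xy_pow // homw_cons homw_nil.
exact: (wequiv_free _ [::] [::] (inord m) false).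
Qed.

Lemma psi_rho (w : word 'I_n) :
  wequiv (rho_rels n) (homw (letter_map psi_gen) (rho_hom w)) w.
Proof.
rewrite rho_homE; apply: homw_comp_id => i.
by rewrite rho_imgE psi_xy_pow /rho ?inord_val // -ltnS.
Qed.

Lemma rho_psi (v : word xy) :
  wequiv (torus_rels n) (rho_hom (homw (letter_map psi_gen) v)) v.
Proof.
rewrite rho_homE; apply: homw_comp_id => -[]; rewrite /psi_gen /rho !homw_cons homw_nil cats0.
- rewrite !letter_map_gen !rho_img_inord // xy_pow_n.
  exact: (wequiv_free _ [:: X] [::] gen_y true).
- by rewrite letter_map_gen rho_img_inord // xy_pow_n.
Qed.

End RhoPsi.

(* rho descends to the quotient (it kills the relators), it is injective since
   psi o rho = id, and surjective since rho o psi = id. *)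
Theorem proposition4p2 (n : nat) (hn : 1 <= n) :
  (forall w w' : word 'I_n,
      wequiv (rho_rels n) w w' ->
      wequiv (torus_rels n) (rho_hom w) (rho_hom w')) /\
  (forall w w' : word 'I_n,
      wequiv (torus_rels n) (rho_hom w) (rho_hom w') ->
      wequiv (rho_rels n) w w') /\
  (forall v : word xy, exists w : word 'I_n,
      wequiv (torus_rels n) (rho_hom w) v).
Proof.
case: n hn => // m _; split; [|split].
- move=> w w'; rewrite !rho_homE; exact: homw_wequiv (@rho_kills_rels m) w w'.
- move=> w w'; rewrite !rho_homE.
  move=> /(homw_wequiv (@psi_kills_rels m)) Hpsi.
  by rewrite -(psi_rho w) -(psi_rho w').
- by move=> v; exists (homw (letter_map (@psi_gen m)) v); exact: rho_psi.
Qed.
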